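(* For every zero-normalized $\Gamma_{m,n}$-semimodule $\Delta$, the partition $P(\widehat{\Delta})$ is the conjugate (transpose) of the partition $P(\Delta)$.
   Context: Let $m,n$ be coprime positive integers and $\Gamma_{m,n}=\{am+bn:a,b\in\mathbb{Z}_{\ge0}\}$. A $\Gamma_{m,n}$-semimodule is $\Delta\subset\mathbb{Z}_{\ge0}$ with $\Delta+\Gamma_{m,n}\subset\Delta$; zero-normalized means $\min\Delta=0$. Its dual is $\Delta^*=\{\varphi\in\mathbb{Z}:\varphi+\Delta\subset\Gamma_{m,n}\}$ and $\widehat\Delta=\Delta^*-\min\Delta^*$ (equivalently $\max(\mathbb{Z}\setminus\Delta)-(\mathbb{Z}\setminus\Delta)$). For a zero-normalized semimodule $\Delta$ (which contains all sufficiently large integers), $P(\Delta)$ is the partition whose boundary lattice path is obtained by reading the integers $0,1,2,\dots$ in order and taking a north unit step for each $x\in\Delta$ and a west unit step for each $x\notin\Delta$ (the path bounds the Young diagram of $P(\Delta)$ from above); equivalently, the parts of $P(\Delta)$ are the positive numbers among $\#\{x\in\Delta: x<y\}$, $y\in\mathbb{Z}_{\ge0}\setminus\Delta$. This $P(\Delta)$ is a simultaneous $m$-core and $n$-core (Anderson's correspondence). *)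

From Stdlib Require Import ClassicalEpsilon.
From mathcomp Require Import all_boot all_order all_algebra.
Set Implicit Arguments. Unset Strict Implicit. Unset Printing Implicit Defensive.
Import Order.TTheory GRing.Theory Num.Theory.

Definition Gamma (m n : nat) (g : nat) : Prop :=
  exists a b : nat, g = (a * m + b * n)%N.
Definition GammaZ (m n : nat) (z : int) : Prop :=
  exists a b : nat, z = Posz (a * m + b * n)%N.

Definition semimodule (m n : nat) (D : nat -> Prop) : Prop :=
  forall x g, D x -> Gamma m n g -> D (x + g)%N.

(* zero-normalized: min Delta = 0 (Delta is a subset of Z_{>=0}). *)
Definition zero_normalized (D : nat -> Prop) : Prop := D 0%N.

Definition dual (m n : nat) (D : nat -> Prop) (phi : int) : Prop :=
  forall x, D x -> GammaZ m n (phi + Posz x)%R.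

(* min Delta^* (chosen by Hilbert's epsilon; it exists for semimodules). *)
Definition dual_min (m n : nat) (D : nat -> Prop) : int :=
  epsilon (inhabits 0%R)
    (fun f => dual m n D f /\ forall g, dual m n D g -> (f <= g)%R).

(* hat Delta = Delta^* - min Delta^*, a subset of Z_{>=0}, given as a set of nat. *)
Definition hat (m n : nat) (D : nat -> Prop) : nat -> Prop :=
  fun k => dual m n D (dual_min m n D + Posz k)%R.

Definition decP (P : Prop) : bool :=
  if excluded_middle_informative P then true else false.

(* a bound N with [N, oo) contained in D (chosen by epsilon; the value of
   P below does not depend on the choice) *)
Definition bound (D : nat -> Prop) : nat :=
  epsilon (inhabits 0%N) (fun N => forall y, (N <= y)%N -> D y).

Definition P (D : nat -> Prop) : seq nat :=
  sort geq
    [seq c <- [seq count (fun x => decP (D x)) (iota 0 y)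
              | y <- iota 0 (bound D) & ~~ decP (D y)]
    | (0 < c)%N].

Definition conjugate (lam : seq nat) : seq nat :=
  [seq count (fun p => (j <= p)%N) lam | j <- iota 1 (foldr maxn 0%N lam)].

From Pilot Require Import Defs.
From Stdlib Require Import ClassicalEpsilon Classical.
From mathcomp Require Import all_boot all_order all_algebra.
From mathcomp Require Import zify ring.
Import Order.TTheory GRing.Theory Num.Theory.

Set Implicit Arguments.
Unset Strict Implicit.
Unset Printing Implicit Defensive.

(* Write f = mn - m - n for the Frobenius number of Gamma_{m,n}.  Since
   k \in Gamma exactly when f - k \notin Gamma, an integer phi lies in the dual
   of Delta iff f - phi \notin Delta.  If N is the conductor of Delta (the least
   N with [N, oo) in Delta), then min Delta^* = f - N + 1, so k \in hat Delta
   iff N - 1 - k \notin Delta: on [0, N) the boundary word of hat Delta is the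
   boundary word of Delta reversed, with north and west steps exchanged.  That
   operation transposes the Young diagram. *)

(* [true] is a north step, [false] a west step. *)
Fixpoint row_lengths (s : seq bool) : seq nat :=
  match s with
  | [::] => [::]
  | b :: t => if b then map S (row_lengths t) else 0 :: row_lengths t
  end.

Fixpoint col_lengths (s : seq bool) : seq nat :=
  match s with
  | [::] => [::]
  | b :: t => if b then count negb t :: col_lengths t else col_lengths t
  end.

Lemma size_row_lengths s : size (row_lengths s) = count negb s.
Proof. by elim: s => [|[] t IH] //=; rewrite ?size_map IH. Qed.

Lemma row_lengths_rcons s b :
  row_lengths (rcons s b) =
  if b then row_lengths s else rcons (row_lengths s) (count id s).
Proof.
elim: s => [|c t IH] /=; first by case: b.
by case: b IH => /= ->; case: c => //=; rewrite map_rcons.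
Qed.

Lemma row_lengths_rev_negb s :
  row_lengths (map negb (rev s)) = rev (col_lengths s).
Proof.
elim: s => [|b t IH] //=.
rewrite rev_cons map_rcons row_lengths_rcons IH; case: b => //=.
by rewrite rev_cons count_map count_rev.
Qed.

Lemma foldr_maxn_mapS a :
  a != [::] -> foldr maxn 0 (map S a) = (foldr maxn 0 a).+1.
Proof. by elim: a => [|x [|y a] IH] //= _; have /= -> := IH isT; rewrite maxnSS. Qed.

Lemma col_lengths_conjugate s :
  [seq c <- col_lengths s | 0 < c] = conjugate (row_lengths s).
Proof.
elim: s => [|[] t IH] //=; rewrite IH; last first.
  rewrite /conjugate /= max0n; apply/eq_in_map => j.
  by rewrite mem_iota; case: j.
have [no_west|some_west] := posnP (count negb t).
  by have /eqP := size_row_lengths t; rewrite no_west size_eq0 => /eqP ->.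
have rows_nonempty : row_lengths t != [::].
  by rewrite -size_eq0 size_row_lengths -lt0n.
rewrite /conjugate foldr_maxn_mapS //= count_map count_predT size_row_lengths.
congr cons; rewrite (iotaDl 1 1) -map_comp; apply: eq_map => j /=.
by rewrite count_map.
Qed.

Lemma foldr_maxn_big s : foldr maxn 0 s = \max_(i <- s) i.
Proof. by elim: s => [|x s IH] /=; rewrite ?big_nil ?big_cons ?IH. Qed.

Lemma conjugate_perm a b : perm_eq a b -> conjugate a = conjugate b.
Proof.
move=> ab; rewrite /conjugate !foldr_maxn_big (perm_big _ ab).
by apply: eq_map => j; apply/permP.
Qed.

Lemma conjugate_sort (leT : rel nat) a : conjugate (sort leT a) = conjugate a.
Proof. by apply: conjugate_perm; rewrite perm_sort. Qed.

Lemma conjugate_filter_pos a : conjugate [seq c <- a | 0 < c] = conjugate a.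
Proof.
rewrite /conjugate; have -> : foldr maxn 0 [seq c <- a | 0 < c] = foldr maxn 0 a.
  by elim: a => [|[|x] a IH] //=; rewrite IH ?max0n.
apply/eq_in_map => j; rewrite mem_iota => /andP[j_gt0 _].
rewrite count_filter; apply: eq_count => x /=.
by case: x => [|x] /=; rewrite ?andbT // leqNgt j_gt0.
Qed.

Lemma sorted_conjugate a : sorted geq (conjugate a).
Proof.
apply: (homo_sorted (e := leq)); last exact: iota_sorted.
by move=> i j le_ij; apply: sub_count => p /= /(leq_trans le_ij).
Qed.

Lemma sort_geq_rev_sorted a : sorted geq a -> sort geq (rev a) = a.
Proof.
have geq_trans : transitive geq by move=> y x z /= le_yx /leq_trans; apply.
have geq_anti : antisymmetric geq by move=> ? ? ?; apply: anti_leq; rewrite andbC.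
move=> sorted_a; rewrite -[RHS](sorted_sort geq_trans sorted_a).
have geq_total : total geq by move=> x y; apply: leq_total.
by apply/(perm_sortP geq_total geq_trans geq_anti); rewrite perm_rev.
Qed.

Lemma decPP (Q : Prop) : reflect Q (Defs.decP Q).
Proof. by rewrite /Defs.decP; case: excluded_middle_informative; constructor. Qed.

Lemma filter_iota_eventually_true (E : pred nat) K L :
  (forall y, K <= y -> E y) -> (forall y, L <= y -> E y) ->
  [seq y <- iota 0 K | ~~ E y] = [seq y <- iota 0 L | ~~ E y].
Proof.
wlog le_KL : K L / K <= L.
  move=> wlog_KL EK EL.
  by case: (leqP K L) => [|/ltnW] le; [|symmetry]; apply: wlog_KL.
move=> EK _; rewrite -(subnKC le_KL) iotaD filter_cat.
rewrite (@eq_in_filter _ _ pred0 (iota (0 + K) _)) ?filter_pred0 ?cats0 //.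
by move=> y; rewrite mem_iota => /andP[/EK -> _].
Qed.

Lemma row_lengths_iota (d : pred nat) k N :
  row_lengths (map d (iota k N)) =
  [seq count d (iota k (y - k)) | y <- iota k N & ~~ d y].
Proof.
elim: N k => [|N IH] k //=.
have shift y : y \in [seq y <- iota k.+1 N | ~~ d y] ->
    count d (iota k.+1 (y - k.+1)) + d k = count d (iota k (y - k)).
  rewrite mem_filter mem_iota => /and3P[_ lt_ky _].
  by rewrite -(subnSK lt_ky) /= addnC.
case dk: (d k) => /=; rewrite IH.
  by rewrite -map_comp; apply/eq_in_map => y /shift /=; rewrite dk addn1.
rewrite subnn /=; congr cons; apply/eq_in_map => y /shift.
by rewrite dk addn0.
Qed.

Lemma P_word (E : nat -> Prop) N : (forall y, N <= y -> E y) ->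
  P E = sort geq
          [seq c <- row_lengths (map (fun y => Defs.decP (E y)) (iota 0 N)) | 0 < c].
Proof.
move=> EN; rewrite /P row_lengths_iota.
under [in RHS]eq_map => y do rewrite subn0.
have E_bound y : bound E <= y -> E y.
  exact: (epsilon_spec (inhabits 0) (fun N => forall y, N <= y -> E y) (ex_intro _ N EN)).
by rewrite (@filter_iota_eventually_true _ _ N) // => y /[dup] => [/E_bound|/EN] /decPP.
Qed.

Lemma exists_conductor (E : nat -> Prop) K : (forall y, K <= y -> E y) ->
  exists N, (forall y, N <= y -> E y) /\ (0 < N -> ~ E N.-1).
Proof.
elim: K => [|K IH] EK; first by exists 0.
have [EK'|notEK] := classic (E K); last by exists K.+1.
by apply: IH => y; rewrite leq_eqVlt => /predU1P[<- // | /EK].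
Qed.

Section Frobenius.
Variables (m n : nat).
Hypotheses (m_gt0 : 0 < m) (n_gt0 : 0 < n) (co_mn : coprime m n).
Local Open Scope ring_scope.

Definition frobenius : int := Posz (m * n) - Posz m - Posz n.

Lemma GammaZ_ge0 z : GammaZ m n z -> 0 <= z.
Proof. by move=> [a [b ->]]. Qed.

Lemma GammaZ_or_frobenius_sub k : GammaZ m n k \/ GammaZ m n (frobenius - k).
Proof.
have [u [v]] := Bezoutz (Posz m) (Posz n).
rewrite /gcdz /= (eqP co_mn) => bezout.
set q := ((k * v) %/ Posz m)%Z; set r := ((k * v) %% Posz m)%Z.
have r_ge0 : 0 <= r by rewrite /r modz_ge0 // eqz_nat -lt0n.
have r_lt_m : r < Posz m by rewrite /r ltz_pmod.
(* k = (k u + q n) m + r n with 0 <= r < m; the sign of the m-coefficient decides *)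
have k_eq : k = (k * u + q * Posz n) * Posz m + r * Posz n.
  have {1}-> : k = k * (u * Posz m + v * Posz n) by rewrite bezout mulr1.
  by rewrite mulrDr (mulrA k v) [k * v](divz_eq _ (Posz m)); ring.
move: (k * u + q * Posz n) k_eq => Q k_eq.
have [Q_ge0|Q_lt0] := lerP 0 Q.
  by left; exists (absz Q), (absz r); rewrite PoszD !PoszM !gez0_abs.
right; exists (absz (- Q - 1)%R), (absz (Posz m - 1 - r)%R).
rewrite PoszD !PoszM !gez0_abs /frobenius ?PoszM ?k_eq; [ring | lia | lia].
Qed.

Lemma frobenius_notin_GammaZ : ~ GammaZ m n frobenius.
Proof.
move=> [a [b frob_eq]].
have sum_eq : (a.+1 * m + b.+1 * n = m * n)%N by move: frob_eq; rewrite /frobenius; lia.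
have m_dvd : (m %| b.+1)%N.
  rewrite -(Gauss_dvdl _ co_mn); apply/dvdnP; exists (n - a.+1)%N.
  by rewrite mulnBl; lia.
have n_dvd : (n %| a.+1)%N.
  have co_nm : coprime n m by rewrite coprime_sym.
  rewrite -(Gauss_dvdl _ co_nm); apply/dvdnP; exists (m - b.+1)%N.
  by rewrite mulnBl; lia.
have := dvdn_leq (ltn0Sn b) m_dvd; have := dvdn_leq (ltn0Sn a) n_dvd.
have : (0 < m * n)%N by rewrite muln_gt0 m_gt0 n_gt0.
nia.
Qed.

Variable D : nat -> Prop.
Hypotheses (semimodule_D : semimodule m n D) (D0 : zero_normalized D).

Lemma dualE phi :
  dual m n D phi <-> ~ (0 <= frobenius - phi /\ D (absz (frobenius - phi))).
Proof.
split=> [dual_phi [frob_ge0 D_frob] | notD x Dx].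
  apply: frobenius_notin_GammaZ.
  by have := dual_phi _ D_frob; rewrite gez0_abs // [phi + _]addrC subrK.
have [//|[a [b Gamma_eq]]] := GammaZ_or_frobenius_sub (phi + Posz x).
have frob_eq : frobenius - phi = Posz (x + (a * m + b * n)).
  by rewrite PoszD -Gamma_eq; ring.
exfalso; apply: notD; rewrite frob_eq; split => //.
by apply: semimodule_D => //; exists a, b.
Qed.

Lemma mem_gt_frobenius y : frobenius < Posz y -> D y.
Proof.
move=> frob_lt_y; have [[a [b /eqP]]|/GammaZ_ge0] := GammaZ_or_frobenius_sub y.
  rewrite eqz_nat => /eqP ->.
  by rewrite -[X in D X]add0n; apply: semimodule_D; last by exists a, b.
by rewrite subr_ge0 leNgt frob_lt_y.
Qed.

Variable N : nat.
Hypotheses (conductor_D : forall y, (N <= y)%N -> D y)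
           (conductor_min : (0 < N)%N -> ~ D N.-1).

Lemma dual_minE : dual_min m n D = frobenius - Posz N + 1.
Proof.
have frob_sub_N_min :
    dual m n D (frobenius - Posz N + 1) /\
    forall g, dual m n D g -> frobenius - Posz N + 1 <= g.
  split=> [|g /dualE dual_g].
    apply/dualE; have -> : frobenius - (frobenius - Posz N + 1) = Posz N - 1 by ring.
    by case=> N_ge1; rewrite (_ : absz _ = N.-1); [apply: conductor_min | ]; lia.
  rewrite leNgt; apply/negP => g_lt; apply: dual_g; split; first lia.
  by apply: conductor_D; lia.
have [dual_d d_min] := epsilon_spec (inhabits 0)
  (fun f => dual m n D f /\ forall g, dual m n D g -> f <= g)
  (ex_intro _ _ frob_sub_N_min).
apply/le_anti/andP; split; first exact: d_min (proj1 frob_sub_N_min).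
exact: (proj2 frob_sub_N_min) _ dual_d.
Qed.

Lemma hatE k : hat m n D k <-> ~ ((k < N)%N /\ D (N.-1 - k)).
Proof.
rewrite /hat dual_minE dualE.
have -> : frobenius - (frobenius - Posz N + 1 + Posz k) = Posz N - 1 - Posz k by ring.
have abszE : (k < N)%N -> absz (Posz N - 1 - Posz k)%R = (N.-1 - k)%N by lia.
split=> notD [in_range Dk]; apply: notD; split; try lia.
  by rewrite abszE.
have lt_kN : (k < N)%N by lia.
by rewrite -abszE.
Qed.

Lemma hat_word :
  map (fun y => Defs.decP (hat m n D y)) (iota 0 N) =
  map negb (rev (map (fun y => Defs.decP (D y)) (iota 0 N))).
Proof.
apply: (@eq_from_nth _ false) => [|i]; first by rewrite !size_map size_rev size_map.
rewrite size_map size_iota => lt_iN.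
rewrite (nth_map 0) ?size_iota // nth_iota // add0n.
rewrite (nth_map false) ?size_rev ?size_map ?size_iota //.
rewrite nth_rev ?size_map ?size_iota // (nth_map 0) ?size_iota ?nth_iota; try lia.
rewrite (_ : 0 + (N - i.+1) = N.-1 - i)%N; last lia.
apply/idP/negP => [/decPP/hatE hat_i /decPP D_i | notD]; first by apply: hat_i.
by apply/decPP/hatE => -[_ /decPP].
Qed.

End Frobenius.

Theorem mainTheorem11 (m n : nat) (D : nat -> Prop) :
  (0 < m)%N -> (0 < n)%N -> coprime m n ->
  semimodule m n D -> zero_normalized D ->
  P (hat m n D) = conjugate (P D).
Proof.
move=> m_gt0 n_gt0 co_mn semimodule_D D0.
have [N [conductor_D conductor_min]] : exists N,
    (forall y, (N <= y)%N -> D y) /\ ((0 < N)%N -> ~ D N.-1).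
  apply: (@exists_conductor _ (absz (frobenius m n)).+1) => y lt_frob_y.
  by apply: (mem_gt_frobenius m_gt0 n_gt0 co_mn semimodule_D D0); lia.
have hatE := hatE m_gt0 n_gt0 co_mn semimodule_D conductor_D conductor_min.
have hat_conductor y : (N <= y)%N -> hat m n D y by move=> le_Ny; apply/hatE => -[]; lia.
rewrite (P_word hat_conductor) (P_word conductor_D) conjugate_sort conjugate_filter_pos.
rewrite (hat_word m_gt0 n_gt0 co_mn semimodule_D conductor_D conductor_min).
rewrite row_lengths_rev_negb filter_rev col_lengths_conjugate.
by rewrite sort_geq_rev_sorted ?sorted_conjugate.
Qed.
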